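(* Consider any sequences evolved by Algorithm 1 and assume there is $\underline\lambda>0$ with $\lambda_k\ge\underline\lambda$ for all $k\ge1$. Let $d_0:=\|x^*-x^0\|$ and $\alpha:=\sqrt{\frac{\mu\underline\lambda}{1+\mu\underline\lambda}}\in(0,1)$. Then: (a) for all $k\ge1$, $h(y^k)-h(x^* )\le\frac{d_0^2}{2\underline\lambda}(1-\alpha)^{k-1}$ and $\max\{\|x^*-y^k\|,\|x^*-x^k\|\}\le\frac{d_0}{\sqrt{\mu\underline\lambda}}(1-\alpha)^{(k-1)/2}$; (b) for all $k\ge1$, $v^{k+1}\in\partial_{\varepsilon_{k+1}}f(y^{k+1})+\partial g(y^{k+1})$, $\|v^{k+1}\|\le\frac{\sqrt6\,\big(1+\sigma\sqrt{1+\mu\underline\lambda}\big)}{\mu^{1/2}\underline\lambda^{3/2}}\,d_0\,(1-\alpha)^{(k-1)/2}$, and $\varepsilon_{k+1}\le\frac{3\sigma^2d_0^2}{\mu\underline\lambda^2}(1-\alpha)^{k-1}$.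
   Context: Setting: $\mathcal H$ is a finite-dimensional real inner product space with inner product $\langle\cdot,\cdot\rangle$ and norm $\|\cdot\|$. $f,g:\mathcal H\to(-\infty,\infty]$ are proper, closed, convex functions, $h:=f+g$ has nonempty domain, and $g$ is $\mu$-strongly convex for some $\mu>0$, i.e. $g(tx+(1-t)y)\le tg(x)+(1-t)g(y)-\frac{\mu}{2}t(1-t)\|x-y\|^2$ for all $x,y\in\mathcal H$, $t\in[0,1]$. $x^*$ denotes the unique minimizer of $h$. For $\varepsilon\ge 0$, $\partial_\varepsilon f(y):=\{u\in\mathcal H: f(w)\ge f(y)+\langle u,w-y\rangle-\varepsilon\ \forall w\in\mathcal H\}$, and $\partial g:=\partial_0 g$. Algorithm 1: Choose $x^0,y^0\in\mathcal H$ and $\sigma\in[0,1]$, and set $A_0=0$. For $k=0,1,2,\dots$: choose $\lambda_{k+1}>0$, set $a_{k+1}=\frac{(1+2\mu A_k)\lambda_{k+1}+\sqrt{(1+2\mu A_k)^2\lambda_{k+1}^2+4(1+\mu A_k)A_k\lambda_{k+1}}}{2}$ and $\tilde x^k=\frac{a_{k+1}-\mu A_k\lambda_{k+1}}{A_k+a_{k+1}}x^k+\frac{A_k+\mu A_k\lambda_{k+1}}{A_k+a_{k+1}}y^k$; compute $(y^{k+1},v^{k+1},\varepsilon_{k+1})\in\mathcal H\times\mathcal H\times[0,\infty)$ such that $v^{k+1}\in\partial_{\varepsilon_{k+1}}f(y^{k+1})+\partial g(y^{k+1})$ and $\frac{\|\lambda_{k+1}v^{k+1}+y^{k+1}-\tilde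 x^k\|^2}{1+\lambda_{k+1}\mu}+2\lambda_{k+1}\varepsilon_{k+1}\le\sigma^2\|y^{k+1}-\tilde x^k\|^2$; then set $A_{k+1}=A_k+a_{k+1}$ and $x^{k+1}=\frac{1+\mu A_k}{1+\mu A_{k+1}}x^k+\frac{\mu a_{k+1}}{1+\mu A_{k+1}}y^{k+1}-\frac{a_{k+1}}{1+\mu A_{k+1}}v^{k+1}$. ''Sequences evolved by Algorithm 1'' means any sequences satisfying all these relations for every $k\ge 0$. *)

From HB Require Import structures.
From mathcomp Require Import all_boot all_order all_algebra.
From mathcomp Require Import all_classical all_reals all_analysis.
Import numFieldNormedType.Exports.
Set Implicit Arguments. Unset Strict Implicit. Unset Printing Implicit Defensive.
Import Order.TTheory GRing.Theory Num.Theory.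
Local Open Scope ring_scope.
Local Open Scope classical_set_scope.

Section Defs.
Variables (R : realType) (n : nat).
Notation H := 'rV[R]_n.

Definition inner (u v : H) : R := (u *m v^T) 0 0.
Definition hnorm (u : H) : R := Num.sqrt (inner u u).

Local Open Scope ereal_scope.

Definition proper_fun (f : H -> \bar R) : Prop :=
  (forall x, f x != -oo) /\ (exists x, f x < +oo).

Definition closed_fun (f : H -> \bar R) : Prop :=
  closed [set p : H * R | f p.1 <= p.2%:E].

Definition convex_fun (f : H -> \bar R) : Prop :=
  forall (x y : H) (t : R), (0 <= t <= 1)%R ->
    f (t *: x + (1 - t) *: y)%R <= t%:E * f x + (1 - t)%:E * f y.

Definition strongly_convex (mu : R) (g : H -> \bar R) : Prop :=
  forall (x y : H) (t : R), (0 <= t <= 1)%R ->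
    g (t *: x + (1 - t) *: y)%R <=
      t%:E * g x + (1 - t)%:E * g y
      - (mu / 2 * t * (1 - t) * hnorm (x - y) ^+ 2)%R%:E.

Definition dom (f : H -> \bar R) : set H := [set x | f x < +oo].

Definition eps_subdiff (eps : R) (f : H -> \bar R) (y : H) : set H :=
  [set u | f y < +oo /\
     forall w : H, f y + (inner u (w - y) - eps)%R%:E <= f w].

Definition subdiff (f : H -> \bar R) (y : H) : set H := eps_subdiff 0 f y.

Definition in_sum (A B : set H) (v : H) : Prop :=
  exists u1 u2, A u1 /\ B u2 /\ v = (u1 + u2)%R.

End Defs.

Local Open Scope ring_scope.

Definition algorithm1 (R : realType) (n : nat) (f g : 'rV[R]_n -> \bar R)
  (mu sigma : R) (x y xt v : nat -> 'rV[R]_n) (lam eps A a : nat -> R) : Prop :=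
  0 <= sigma <= 1 /\ A 0%N = 0 /\
  forall k : nat,
    0 < lam k.+1 /\
    a k.+1 = ((1 + 2 * mu * A k) * lam k.+1 +
              Num.sqrt ((1 + 2 * mu * A k) ^+ 2 * lam k.+1 ^+ 2
                        + 4 * (1 + mu * A k) * A k * lam k.+1)) / 2 /\
    xt k = ((a k.+1 - mu * A k * lam k.+1) / (A k + a k.+1)) *: x k
           + ((A k + mu * A k * lam k.+1) / (A k + a k.+1)) *: y k /\
    0 <= eps k.+1 /\
    in_sum (eps_subdiff (eps k.+1) f (y k.+1)) (subdiff g (y k.+1)) (v k.+1) /\
    hnorm (lam k.+1 *: v k.+1 + y k.+1 - xt k) ^+ 2 / (1 + lam k.+1 * mu)
      + 2 * lam k.+1 * eps k.+1 <= sigma ^+ 2 * hnorm (y k.+1 - xt k) ^+ 2 /\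
    A k.+1 = A k + a k.+1 /\
    x k.+1 = ((1 + mu * A k) / (1 + mu * A k.+1)) *: x k
             + ((mu * a k.+1) / (1 + mu * A k.+1)) *: y k.+1
             - (a k.+1 / (1 + mu * A k.+1)) *: v k.+1.

From HB Require Import structures.
From mathcomp Require Import all_boot all_order all_algebra.
From mathcomp Require Import all_classical all_reals all_analysis.
From mathcomp Require Import ring lra.
Import numFieldNormedType.Exports.
Import Order.TTheory GRing.Theory Num.Theory.
Local Open Scope ring_scope.
Set Implicit Arguments. Unset Strict Implicit. Unset Printing Implicit Defensive.

(* The proof is the classical estimate-sequence / potential argument.
   - The Euclidean geometry of 'rV[R]_n: bilinearity of [inner], Cauchy-Schwarz,
     the triangle inequality and homogeneity of [hnorm].
   - Convex analysis: an (eps-)subgradient of f plus a subgradient of the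
     mu-strongly convex g gives the lower bound
       h w >= h y + <v, w - y> - eps + mu/2 |w - y|^2,
     and the minimiser x* satisfies the quadratic growth h z >= h x* + mu/2 |z - x*|^2.
   - The step sizes: a_{k+1} solves a_{k+1}^2 = lam_{k+1}(a_{k+1}(1 + 2 mu A_k) + (1 + mu A_k) A_k),
     whence A_k <= (1 - alpha) A_{k+1} as soon as lam_{k+1} >= lamb.
   - One iteration does not increase the potential
       Phi_k = A_k (h(y_k) - h(x* )) + (1 + mu A_k)/2 |x_k - x*|^2,
     by an exact algebraic identity plus the relative error criterion.
   Hence Phi_k <= |x_0 - x*|^2 / 2 and A_{k+1} >= lamb (1 - alpha)^(-k), which gives
   part (a); part (b) follows from the error criterion, the triangle inequality
   and the distance bounds of part (a) at steps k and k+1. *)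

Section InnerProduct.
Variables (R : realType) (n : nat).
Implicit Types (u w z : 'rV[R]_n) (c : R).

Lemma inner_sum u w : inner u w = \sum_j u 0 j * w 0 j.
Proof. by rewrite /inner !mxE; apply: eq_bigr => j _; rewrite mxE. Qed.

Lemma inner_sym u w : inner u w = inner w u.
Proof. by rewrite !inner_sum; apply: eq_bigr => j _; rewrite mulrC. Qed.

Lemma innerDl u w z : inner (u + w) z = inner u z + inner w z.
Proof. by rewrite !inner_sum -big_split; apply: eq_bigr => j _; rewrite mxE mulrDl. Qed.

Lemma innerZl c u w : inner (c *: u) w = c * inner u w.
Proof. by rewrite !inner_sum mulr_sumr; apply: eq_bigr => j _; rewrite mxE mulrA. Qed.

Lemma innerNl u w : inner (- u) w = - inner u w.
Proof. by rewrite -scaleN1r innerZl mulN1r. Qed.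

Lemma innerBl u w z : inner (u - w) z = inner u z - inner w z.
Proof. by rewrite innerDl innerNl. Qed.

Lemma innerDr u w z : inner z (u + w) = inner z u + inner z w.
Proof. by rewrite !(inner_sym z) innerDl. Qed.

Lemma innerZr c u w : inner w (c *: u) = c * inner w u.
Proof. by rewrite !(inner_sym w) innerZl. Qed.

Lemma innerNr u w : inner w (- u) = - inner w u.
Proof. by rewrite !(inner_sym w) innerNl. Qed.

Lemma innerBr u w z : inner z (u - w) = inner z u - inner z w.
Proof. by rewrite !(inner_sym z) innerBl. Qed.

Lemma inner_ge0 u : 0 <= inner u u.
Proof. by rewrite inner_sum; apply: sumr_ge0 => j _; rewrite -expr2 sqr_ge0. Qed.

Lemma hnorm_ge0 u : 0 <= hnorm u.
Proof. exact: sqrtr_ge0. Qed.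

Lemma hnorm_sq u : hnorm u ^+ 2 = inner u u.
Proof. by rewrite /hnorm sqr_sqrtr // inner_ge0. Qed.

Lemma le_of_sqr_le (s t : R) : 0 <= t -> s ^+ 2 <= t ^+ 2 -> s <= t.
Proof. by move=> t0 h; nra. Qed.

(* Cauchy-Schwarz: the quadratic t |-> |u - t w|^2 is nonnegative, so its
   discriminant is nonpositive. *)
Lemma inner_le_hnorm u w : inner u w <= hnorm u * hnorm w.
Proof.
have quad t : 0 <= inner u u - 2 * t * inner u w + t ^+ 2 * inner w w.
  have := inner_ge0 (u - t *: w).
  by rewrite !innerBl !innerBr !innerZl !innerZr (inner_sym w u); lra.
have uu0 := inner_ge0 u; have ww0 := inner_ge0 w.
have discr : inner u w ^+ 2 <= inner u u * inner w w.
  have [ww_eq0|ww_neq0] := eqVneq (inner w w) 0.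
    have [->|uw_neq0] := eqVneq (inner u w) 0; first by rewrite ww_eq0; lra.
    have := quad ((inner u u + 1) / (2 * inner u w)).
    have -> : 2 * ((inner u u + 1) / (2 * inner u w)) * inner u w = inner u u + 1.
      by field; rewrite uw_neq0.
    by rewrite ww_eq0 mulr0 addr0; lra.
  have ww_gt0 : 0 < inner w w by rewrite lt_def ww_neq0 ww0.
  have := quad (inner u w / inner w w).
  have -> : inner u u - 2 * (inner u w / inner w w) * inner u w
              + (inner u w / inner w w) ^+ 2 * inner w w
            = inner u u - inner u w ^+ 2 / inner w w by field; rewrite gt_eqF.
  by rewrite subr_ge0 ler_pdivrMr.
apply: le_of_sqr_le; first by rewrite mulr_ge0 ?hnorm_ge0.
by rewrite exprMn !hnorm_sq.
Qed.

Lemma hnormD_le u w : hnorm (u + w) <= hnorm u + hnorm w.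
Proof.
apply: le_of_sqr_le; first by rewrite addr_ge0 ?hnorm_ge0.
rewrite hnorm_sq innerDl !innerDr (inner_sym w u) sqrrD !hnorm_sq.
by have := inner_le_hnorm u w; lra.
Qed.

Lemma hnormZ c u : hnorm (c *: u) = `|c| * hnorm u.
Proof.
by rewrite /hnorm innerZl innerZr mulrA -expr2 sqrtrM ?sqr_ge0 // sqrtr_sqr.
Qed.

Lemma hnormN u : hnorm (- u) = hnorm u.
Proof. by rewrite -scaleN1r hnormZ normrN normr1 mul1r. Qed.

Lemma hnormBC u w : hnorm (u - w) = hnorm (w - u).
Proof. by rewrite -opprB hnormN. Qed.

Lemma hnormB_le u w : hnorm (u - w) <= hnorm u + hnorm w.
Proof. by rewrite -(hnormN w); apply: hnormD_le. Qed.

Lemma affine_combB (c1 c2 : R) u w z : c1 + c2 = 1 ->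
  c1 *: u + c2 *: w - z = c1 *: (u - z) + c2 *: (w - z).
Proof.
move=> c12; apply/rowP => j; rewrite !mxE.
have -> : c2 = 1 - c1 by lra.
by ring.
Qed.

Lemma hnorm_affine_le (c1 c2 D : R) u w z : 0 <= c1 -> 0 <= c2 -> c1 + c2 = 1 ->
  hnorm (u - z) <= D -> hnorm (w - z) <= D -> hnorm (c1 *: u + c2 *: w - z) <= D.
Proof.
move=> c10 c20 c12 uD wD; rewrite affine_combB //.
apply: (le_trans (hnormD_le _ _)); rewrite !hnormZ !ger0_norm //.
have : c1 * D + c2 * D = D by rewrite -mulrDl c12 mul1r.
by have := ler_wpM2l c10 uD; have := ler_wpM2l c20 wD; lra.
Qed.

End InnerProduct.

Section ConvexAnalysis.
Variables (R : realType) (n : nat).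
Implicit Types (f g : 'rV[R]_n -> \bar R).

(* Letting t -> 0 in (1 - t) d <= c: the limiting step of all the
   convexity arguments below. *)
Lemma le_of_forall_scaled_le (c d : R) :
  0 <= d -> (forall t, 0 < t < 1 -> (1 - t) * d <= c) -> d <= c.
Proof.
move=> d0 scaled; rewrite leNgt; apply/negP => cd.
have c0 : 0 <= c by have := scaled (1 / 2); lra.
have t_in : 0 < (d - c) / (2 * d) < 1.
  by apply/andP; split; [apply: divr_gt0; lra | rewrite ltr_pdivrMr; lra].
have := scaled _ t_in.
have -> : (1 - (d - c) / (2 * d)) * d = (d + c) / 2 by field; lra.
lra.
Qed.

Lemma inner_affine_comb (u w y : 'rV[R]_n) (t : R) :
  inner u (t *: w + (1 - t) *: y - y) = t * inner u (w - y).
Proof. by rewrite !(innerDr, innerZr, innerNr); ring. Qed.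

Lemma strongly_convex_subgrad g mu (y u w : 'rV[R]_n) gy gw :
  strongly_convex mu g -> 0 <= mu -> subdiff g y u -> g y = gy%:E -> g w = gw%:E ->
  gy + inner u (w - y) + mu / 2 * hnorm (w - y) ^+ 2 <= gw.
Proof.
move=> scg mu0 [_ subgrad] gyE gwE.
suff : mu / 2 * hnorm (w - y) ^+ 2 <= gw - gy - inner u (w - y) by lra.
apply: le_of_forall_scaled_le; first by rewrite mulr_ge0 ?sqr_ge0 ?divr_ge0.
move=> t /andP[t0 t1].
have := le_trans (subgrad (t *: w + (1 - t) *: y))
                 (scg w y t (ltac:(apply/andP; split; lra))).
rewrite gyE gwE inner_affine_comb subr0 -!EFinM -!EFinD lee_fin => ineq.
by rewrite -(ler_pM2l t0); lra.
Qed.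

Lemma minimizer_quadratic_growth f g mu (xs y : 'rV[R]_n) fs gs fy gy :
  convex_fun f -> strongly_convex mu g -> 0 <= mu ->
  (forall z, (f xs + g xs <= f z + g z)%E) ->
  f xs = fs%:E -> g xs = gs%:E -> f y = fy%:E -> g y = gy%:E ->
  fs + gs + mu / 2 * hnorm (y - xs) ^+ 2 <= fy + gy.
Proof.
move=> cvf scg mu0 xs_min fsE gsE fyE gyE.
suff : mu / 2 * hnorm (y - xs) ^+ 2 <= fy + gy - (fs + gs) by lra.
apply: le_of_forall_scaled_le; first by rewrite mulr_ge0 ?sqr_ge0 ?divr_ge0.
move=> t /andP[t0 t1].
have t01 : 0 <= t <= 1 by apply/andP; split; lra.
have := le_trans (xs_min (t *: y + (1 - t) *: xs)) (leeD (cvf y xs t t01) (scg y xs t t01)).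
rewrite fsE gsE fyE gyE -!EFinM -!EFinD lee_fin => ineq.
by rewrite -(ler_pM2l t0); lra.
Qed.

Lemma fine_of_proper f z : proper_fun f -> (f z < +oo)%E -> f z = (fine (f z))%:E.
Proof. by case=> not_ninfty _; move: (not_ninfty z); case: (f z). Qed.

Lemma fine_of_sum_lt f g z : proper_fun f -> proper_fun g -> (f z + g z < +oo)%E ->
  f z = (fine (f z))%:E /\ g z = (fine (g z))%:E.
Proof.
case=> fN _ [gN _]; move: (fN z) (gN z).
by case: (f z) => [r||]; case: (g z) => [s||].
Qed.

Lemma fine_of_in_sum f g eps (y v : 'rV[R]_n) : proper_fun f -> proper_fun g ->
  in_sum (eps_subdiff eps f y) (subdiff g y) v ->
  f y = (fine (f y))%:E /\ g y = (fine (g y))%:E.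
Proof.
move=> pf pg [u1 [u2 [[fy_fin _] [[gy_fin _] _]]]].
by split; apply: fine_of_proper.
Qed.

Lemma in_sum_lower_bound f g mu eps (y v w : 'rV[R]_n) fy gy fw gw :
  strongly_convex mu g -> 0 <= mu ->
  in_sum (eps_subdiff eps f y) (subdiff g y) v ->
  f y = fy%:E -> g y = gy%:E -> f w = fw%:E -> g w = gw%:E ->
  fy + gy + inner v (w - y) - eps + mu / 2 * hnorm (w - y) ^+ 2 <= fw + gw.
Proof.
move=> scg mu0 [u1 [u2 [[_ f_sub] [g_sub ->]]]] fyE gyE fwE gwE.
have := f_sub w; rewrite fyE fwE -EFinD lee_fin => f_ineq.
have := strongly_convex_subgrad scg mu0 g_sub gyE gwE.
by rewrite innerDl; lra.
Qed.

End ConvexAnalysis.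

Section StepSizes.
Variable R : realType.

(* a = ((1 + 2 mu A) lam + sqrt(...)) / 2 is the positive root of
   a^2 = lam (a (1 + 2 mu A) + (1 + mu A) A). *)
Lemma step_size_props (A lam mu a : R) : 0 <= A -> 0 < lam -> 0 < mu ->
  a = ((1 + 2 * mu * A) * lam + Num.sqrt ((1 + 2 * mu * A) ^+ 2 * lam ^+ 2
        + 4 * (1 + mu * A) * A * lam)) / 2 ->
  [/\ 0 < a, (1 + 2 * mu * A) * lam <= a &
      a ^+ 2 = lam * (a * (1 + 2 * mu * A) + (1 + mu * A) * A)].
Proof.
move=> A0 lam0 mu0 ->.
set b := (1 + 2 * mu * A) * lam; set c := (1 + mu * A) * A.
have muA0 : 0 <= mu * A by rewrite mulr_ge0 //; lra.
have b0 : 0 < b by rewrite /b mulr_gt0 //; lra.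
have c0 : 0 <= c by rewrite /c mulr_ge0 //; lra.
have -> : (1 + 2 * mu * A) ^+ 2 * lam ^+ 2 + 4 * (1 + mu * A) * A * lam = b ^+ 2 + 4 * c * lam.
  by rewrite /b /c; ring.
have disc0 : 0 <= b ^+ 2 + 4 * c * lam by have := sqr_ge0 b; nra.
set S := Num.sqrt _.
have S0 : 0 <= S := sqrtr_ge0 _.
have S2 : S ^+ 2 = b ^+ 2 + 4 * c * lam by rewrite sqr_sqrtr.
have bS : b <= S by apply: le_of_sqr_le => //; rewrite S2; nra.
split; [lra | lra |].
have -> : lam * ((b + S) / 2 * (1 + 2 * mu * A) + c) = (b + S) / 2 * b + c * lam.
  by rewrite /b; ring.
have -> : c * lam = (S ^+ 2 - b ^+ 2) / 4 by rewrite S2; field.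
by field.
Qed.

Lemma alpha_bounds (mu lamb : R) : 0 < mu -> 0 < lamb ->
  0 < Num.sqrt (mu * lamb / (1 + mu * lamb)) < 1.
Proof.
move=> mu0 lamb0; have ml0 : 0 < mu * lamb by apply: mulr_gt0.
have q0 : 0 < mu * lamb / (1 + mu * lamb) by apply: divr_gt0 => //; lra.
have q1 : mu * lamb / (1 + mu * lamb) < 1 by rewrite ltr_pdivrMr; lra.
rewrite sqrtr_gt0 q0 /=.
by have := q1; rewrite -(ltr_sqrt _ ltr01) sqrtr1.
Qed.

(* Geometric growth of A: A_k <= (1 - alpha) A_{k+1} whenever lam_{k+1} >= lamb,
   since a^2 (1 + lam mu) = lam (A + a) (1 + mu (A + a)) >= lam mu (A + a)^2. *)
Lemma A_growth (A a lam lamb mu : R) : 0 <= A -> 0 < lamb -> lamb <= lam -> 0 < mu ->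
  a = ((1 + 2 * mu * A) * lam + Num.sqrt ((1 + 2 * mu * A) ^+ 2 * lam ^+ 2
        + 4 * (1 + mu * A) * A * lam)) / 2 ->
  A <= (1 - Num.sqrt (mu * lamb / (1 + mu * lamb))) * (A + a).
Proof.
move=> A0 lamb0 lamb_le mu0 aE.
have lam0 : 0 < lam by lra.
have [a0 _ a_sq] := step_size_props A0 lam0 mu0 aE.
set al := Num.sqrt _.
have L0 : 0 < 1 + lam * mu by have := mulr_gt0 lam0 mu0; lra.
have L1 : 0 < 1 + mu * lamb by have := mulr_gt0 mu0 lamb0; lra.
have al_sq : al ^+ 2 = mu * lamb / (1 + mu * lamb).
  by rewrite sqr_sqrtr // divr_ge0 //; [apply: mulr_ge0 | ]; lra.
have a_sq' : a ^+ 2 * (1 + lam * mu) = lam * (A + a) * (1 + mu * (A + a)).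
  by rewrite mulrDr mulr1 {1}a_sq; ring.
have lower : lam * mu / (1 + lam * mu) * (A + a) ^+ 2 <= a ^+ 2.
  rewrite mulrAC ler_pdivrMr // a_sq'.
  have : 0 <= lam * (A + a) by apply: mulr_ge0; lra.
  nra.
have ratio : mu * lamb / (1 + mu * lamb) <= lam * mu / (1 + lam * mu).
  rewrite ler_pdivrMr // mulrAC ler_pdivlMr //.
  have : mu * lamb <= lam * mu by rewrite mulrC; apply: ler_wpM2r; lra.
  nra.
have : (al * (A + a)) ^+ 2 <= a ^+ 2.
  rewrite exprMn al_sq; apply: le_trans lower.
  by apply: ler_wpM2r => //; apply: sqr_ge0.
by move/le_of_sqr_le => /(_ (ltW a0)); lra.
Qed.

End StepSizes.

Section OneIteration.
Variables (R : realType) (n : nat).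

(* The exact bookkeeping identity behind the potential decrease: with
   lam = a^2 / (a (1 + 2 mu A) + (1 + mu A) A), the linear and quadratic terms
   of the lower models at y_k and x* combine with the old potential, the new
   distance and the proximal gap into a nonnegative multiple of |y_k - x_k|^2. *)
Lemma potential_identity (xk yk y v xs : 'rV[R]_n) (A a lam mu : R) :
  0 <= A -> 0 < a -> 0 < mu ->
  lam = a ^+ 2 / (a * (1 + 2 * mu * A) + (1 + mu * A) * A) ->
  let A1 := A + a in
  let xt := ((a - mu * A * lam) / (A + a)) *: xk + ((A + mu * A * lam) / (A + a)) *: yk in
  let x1 := ((1 + mu * A) / (1 + mu * A1)) *: xk + ((mu * a) / (1 + mu * A1)) *: y
            - (a / (1 + mu * A1)) *: v in
  A * inner v (yk - y) + a * inner v (xs - y)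
  + mu / 2 * (A * inner (yk - y) (yk - y) + a * inner (xs - y) (xs - y))
  + (1 + mu * A) / 2 * inner (xk - xs) (xk - xs)
  - (1 + mu * A1) / 2 * inner (x1 - xs) (x1 - xs)
  - A1 * ((inner (y - xt) (y - xt)
           - inner (lam *: v + y - xt) (lam *: v + y - xt) / (1 + lam * mu)) / (2 * lam))
  = mu / 2 * (A * (a * (1 + mu * A) / (1 + mu * A1)) * (1 + lam * mu) / A1)
    * inner (yk - xk) (yk - xk).
Proof.
move=> A0 a0 mu0 lamE A1 xt x1; rewrite /x1 /xt /A1.
rewrite !(innerDl, innerDr, innerZl, innerZr, innerNl, innerNr).
rewrite ?(inner_sym yk xk) ?(inner_sym y xk) ?(inner_sym v xk) ?(inner_sym xs xk)
  ?(inner_sym y yk) ?(inner_sym v yk) ?(inner_sym xs yk) ?(inner_sym v y)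
  ?(inner_sym xs y) ?(inner_sym xs v).
set D := a * (1 + 2 * mu * A) + (1 + mu * A) * A.
have muA0 : 0 <= mu * A by rewrite mulr_ge0 //; lra.
have D0 : 0 < D by rewrite /D ltr_pwDl ?mulr_ge0 ?mulr_gt0 //; lra.
have A1_gt0 : 0 < A + a by lra.
have muA1 : 0 < 1 + mu * (A + a) by nra.
have Da_gt0 : 0 < D + a ^+ 2 * mu by have := mulr_gt0 (exprn_gt0 2 a0) mu0; lra.
rewrite lamE; field.
by rewrite (gt_eqF A1_gt0) (gt_eqF D0) (gt_eqF muA1) (gt_eqF a0) (gt_eqF Da_gt0).
Qed.

Lemma eps_le_prox_gap (y xt v : 'rV[R]_n) (lam mu sigma eps : R) :
  0 < lam -> 0 < mu -> 0 <= sigma <= 1 ->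
  hnorm (lam *: v + y - xt) ^+ 2 / (1 + lam * mu) + 2 * lam * eps
    <= sigma ^+ 2 * hnorm (y - xt) ^+ 2 ->
  eps <= (inner (y - xt) (y - xt)
          - inner (lam *: v + y - xt) (lam *: v + y - xt) / (1 + lam * mu)) / (2 * lam).
Proof.
move=> lam0 mu0 /andP[sigma0 sigma1]; rewrite !hnorm_sq => crit.
have N0 := inner_ge0 (y - xt).
have sigma_sq1 : sigma ^+ 2 <= 1 by rewrite expr2; nra.
have := ler_wpM2r N0 sigma_sq1; rewrite mul1r => sigma_N.
by rewrite ler_pdivlMr; [lra | rewrite mulr_gt0 //; lra].
Qed.

(* One iteration of Algorithm 1 does not increase the potential
   A (h(y) - h* ) + (1 + mu A)/2 |x - x*|^2.  The hypotheses [lb_xs] and [lb_yk]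
   are the lower models of h at x* and (weighted by A) at y_k. *)
Lemma potential_decrease (xk yk y v xs xt x1 : 'rV[R]_n) (A a lam mu sigma eps hk hy hs : R) :
  0 <= A -> 0 < lam -> 0 < mu -> 0 <= sigma <= 1 ->
  a = ((1 + 2 * mu * A) * lam + Num.sqrt ((1 + 2 * mu * A) ^+ 2 * lam ^+ 2
        + 4 * (1 + mu * A) * A * lam)) / 2 ->
  xt = ((a - mu * A * lam) / (A + a)) *: xk + ((A + mu * A * lam) / (A + a)) *: yk ->
  x1 = ((1 + mu * A) / (1 + mu * (A + a))) *: xk + ((mu * a) / (1 + mu * (A + a))) *: y
       - (a / (1 + mu * (A + a))) *: v ->
  hnorm (lam *: v + y - xt) ^+ 2 / (1 + lam * mu) + 2 * lam * eps
    <= sigma ^+ 2 * hnorm (y - xt) ^+ 2 ->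
  hy + inner v (xs - y) - eps + mu / 2 * hnorm (xs - y) ^+ 2 <= hs ->
  A * (hy + inner v (yk - y) - eps + mu / 2 * hnorm (yk - y) ^+ 2) <= A * hk ->
  (A + a) * (hy - hs) + (1 + mu * (A + a)) / 2 * hnorm (x1 - xs) ^+ 2
    <= A * (hk - hs) + (1 + mu * A) / 2 * hnorm (xk - xs) ^+ 2.
Proof.
move=> A0 lam0 mu0 sigma01 aE xtE x1E crit lb_xs lb_yk.
have [a0 _ a_sq] := step_size_props A0 lam0 mu0 aE.
have muA0 : 0 <= mu * A by rewrite mulr_ge0 //; lra.
have D0 : 0 < a * (1 + 2 * mu * A) + (1 + mu * A) * A.
  by rewrite ltr_pwDl ?mulr_ge0 ?mulr_gt0 //; lra.
have lamE : lam = a ^+ 2 / (a * (1 + 2 * mu * A) + (1 + mu * A) * A).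
  by rewrite a_sq mulfK // gt_eqF.
have := potential_identity xk yk y v xs A0 a0 mu0 lamE.
rewrite /= -xtE -x1E => identity.
have eps_gap := eps_le_prox_gap lam0 mu0 sigma01 crit.
rewrite !hnorm_sq in lb_xs lb_yk *.
set gap := (_ - _) / (2 * lam) in eps_gap identity.
have rest0 : 0 <= mu / 2 * (A * (a * (1 + mu * A) / (1 + mu * (A + a)))
                          * (1 + lam * mu) / (A + a)) * inner (yk - xk) (yk - xk).
  have lam_mu0 : 0 <= 1 + lam * mu by have := mulr_gt0 lam0 mu0; lra.
  have muA1 : 0 <= 1 + mu * (A + a) by have := mulr_gt0 mu0 a0; lra.
  by rewrite !mulr_ge0 ?inner_ge0 ?divr_ge0 ?invr_ge0 //; lra.
(* a * lb_xs + lb_yk + identity, with eps replaced by the larger gap *)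
have := ler_wpM2l (ltW a0) lb_xs.
have : (A + a) * eps <= (A + a) * gap by rewrite ler_wpM2l //; lra.
lra.
Qed.

(* The relative error criterion controls the size of the scaled residual:
   lam |v| <= |lam v + y - xt| + |y - xt| <= (1 + sigma sqrt(1 + lam mu)) |y - xt|. *)
Lemma scaled_residual_le (y xt v : 'rV[R]_n) (lam mu sigma eps : R) :
  0 < lam -> 0 < mu -> 0 <= sigma -> 0 <= eps ->
  hnorm (lam *: v + y - xt) ^+ 2 / (1 + lam * mu) + 2 * lam * eps
    <= sigma ^+ 2 * hnorm (y - xt) ^+ 2 ->
  lam * hnorm v <= (1 + sigma * Num.sqrt (1 + lam * mu)) * hnorm (y - xt).
Proof.
move=> lam0 mu0 sigma0 eps0 crit.
have L0 : 0 < 1 + lam * mu by have := mulr_gt0 lam0 mu0; lra.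
have err_le : hnorm (lam *: v + y - xt) <= sigma * Num.sqrt (1 + lam * mu) * hnorm (y - xt).
  apply: le_of_sqr_le; first by rewrite !mulr_ge0 ?sqrtr_ge0 ?hnorm_ge0.
  rewrite !exprMn (sqr_sqrtr (ltW L0)) mulrAC -ler_pdivrMr //.
  have : 0 <= 2 * lam * eps by rewrite !mulr_ge0 //; lra.
  lra.
have -> : lam * hnorm v = hnorm ((lam *: v + y - xt) - (y - xt)).
  by rewrite opprB addrA subrK addrK hnormZ ger0_norm //; lra.
by apply: (le_trans (hnormB_le _ _)); lra.
Qed.

End OneIteration.

Section RateArithmetic.
Variable R : realType.

Lemma rates_of_potential (Ak lamb Q mu d0 hk hs Nx Ny : R) :
  0 < Ak -> 0 < lamb -> 0 < Q -> 0 < mu -> lamb <= Q * Ak -> 0 <= Nx -> 0 <= Ny ->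
  Ak * (hk - hs) + (1 + mu * Ak) / 2 * Nx <= d0 ^+ 2 / 2 ->
  hs + mu / 2 * Ny <= hk ->
  [/\ hk - hs <= d0 ^+ 2 / (2 * lamb) * Q,
      Ny * (mu * lamb) <= d0 ^+ 2 * Q &
      Nx * (mu * lamb) <= d0 ^+ 2 * Q].
Proof.
move=> Ak0 lamb0 Q0 mu0 lamb_le Nx0 Ny0 potential growth.
have gap0 : 0 <= hk - hs.
  have : 0 <= mu / 2 * Ny by rewrite mulr_ge0 // divr_ge0 //; lra.
  lra.
have muAk0 : 0 <= mu * Ak by rewrite mulr_ge0 //; lra.
have value : Ak * (hk - hs) <= d0 ^+ 2 / 2.
  have : 0 <= (1 + mu * Ak) / 2 * Nx by rewrite mulr_ge0 // divr_ge0 //; lra.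
  lra.
have distx : mu * Ak * Nx <= d0 ^+ 2.
  have : 0 <= Ak * (hk - hs) by rewrite mulr_ge0 //; lra.
  have : (1 + mu * Ak) / 2 * Nx = Nx / 2 + mu * Ak * Nx / 2 by field.
  lra.
have disty : Ak * (mu * Ny) <= d0 ^+ 2.
  have : Ak * (mu / 2 * Ny) <= Ak * (hk - hs) by rewrite ler_wpM2l //; lra.
  lra.
have scale (u w : R) : 0 <= u -> Ak * u <= w -> lamb * u <= Q * w.
  move=> u0 uw; apply: (le_trans (ler_wpM2r u0 lamb_le)).
  by rewrite -mulrA ler_wpM2l //; lra.
split.
- rewrite mulrC mulrA ler_pdivlMr; last by lra.
  by have := scale _ _ gap0 value; lra.
- by have := scale _ _ (mulr_ge0 (ltW mu0) Ny0) disty; lra.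
- have := scale _ _ (mulr_ge0 (ltW mu0) Nx0) (_ : Ak * (mu * Nx) <= d0 ^+ 2).
  by rewrite mulrA (mulrC Ak); lra.
Qed.

Lemma hnorm_le_of_sq_rate n (u : 'rV[R]_n) (d0 ml Q : R) : 0 <= d0 -> 0 < ml -> 0 <= Q ->
  hnorm u ^+ 2 * ml <= d0 ^+ 2 * Q -> hnorm u <= d0 / Num.sqrt ml * Num.sqrt Q.
Proof.
move=> d00 ml0 Q0 rate.
have sml0 : 0 < Num.sqrt ml by rewrite sqrtr_gt0.
apply: le_of_sqr_le; first by rewrite mulr_ge0 ?divr_ge0 ?sqrtr_ge0 //; lra.
by rewrite exprMn expr_div_n (sqr_sqrtr (ltW ml0)) (sqr_sqrtr Q0) mulrAC ler_pdivlMr.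
Qed.

(* The factor (1 + sigma sqrt(1 + lam mu)) / lam is nonincreasing in lam. *)
Lemma prox_factor_antitone (lam1 lamb sigma mu : R) :
  0 < lamb -> lamb <= lam1 -> 0 <= sigma -> 0 < mu ->
  lamb * (1 + sigma * Num.sqrt (1 + lam1 * mu))
    <= lam1 * (1 + sigma * Num.sqrt (1 + mu * lamb)).
Proof.
move=> lamb0 lamb_le sigma0 mu0.
set s1 := Num.sqrt (1 + lam1 * mu); set s2 := Num.sqrt (1 + mu * lamb).
suff : lamb * s1 <= lam1 * s2.
  by move=> /(ler_wpM2l sigma0); lra.
apply: le_of_sqr_le; first by rewrite mulr_ge0 ?sqrtr_ge0 //; lra.
rewrite !exprMn /s1 /s2 !sqr_sqrtr; [| nra | nra].
have sq_le : lamb ^+ 2 <= lam1 ^+ 2 by rewrite ler_sqr ?nnegrE //; lra.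
have : lamb * lam1 * mu * lamb <= lamb * lam1 * mu * lam1.
  by rewrite ler_wpM2l // !mulr_ge0 //; lra.
nra.
Qed.

Lemma v_norm_bound (lam1 lamb sigma mu d0 Q hv N : R) :
  0 < lamb -> lamb <= lam1 -> 0 <= sigma -> 0 < mu -> 0 <= d0 -> 0 <= Q ->
  lam1 * hv <= (1 + sigma * Num.sqrt (1 + lam1 * mu)) * N ->
  N <= 2 * (d0 / Num.sqrt (mu * lamb) * Num.sqrt Q) ->
  hv <= Num.sqrt 6 * (1 + sigma * Num.sqrt (1 + mu * lamb))
         / (Num.sqrt mu * (lamb * Num.sqrt lamb)) * d0 * Num.sqrt Q.
Proof.
move=> lamb0 lamb_le sigma0 mu0 d00 Q0 res_le N_le.
set D := d0 / Num.sqrt (mu * lamb) * Num.sqrt Q in N_le *.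
set c1 := 1 + sigma * Num.sqrt (1 + lam1 * mu) in res_le.
set c2 := 1 + sigma * Num.sqrt (1 + mu * lamb).
have smu0 : 0 < Num.sqrt mu by rewrite sqrtr_gt0.
have slamb0 : 0 < Num.sqrt lamb by rewrite sqrtr_gt0.
have D0 : 0 <= D by rewrite /D !mulr_ge0 ?invr_ge0 ?sqrtr_ge0.
have c10 : 1 <= c1 by rewrite /c1 lerDl mulr_ge0 ?sqrtr_ge0.
have c20 : 1 <= c2 by rewrite /c2 lerDl mulr_ge0 ?sqrtr_ge0.
have two_le : 2 <= Num.sqrt (6 : R).
  apply: le_of_sqr_le; first exact: sqrtr_ge0.
  by rewrite sqr_sqrtr; rewrite ?expr2; lra.
have -> : Num.sqrt 6 * c2 / (Num.sqrt mu * (lamb * Num.sqrt lamb)) * d0 * Num.sqrt Q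
          = Num.sqrt 6 * c2 * D / lamb.
  by rewrite /D sqrtrM; [field; rewrite !gt_eqF | lra].
rewrite ler_pdivlMr //.
have lam1_hv : lam1 * hv <= c1 * (2 * D).
  by apply: (le_trans res_le); rewrite ler_wpM2l //; lra.
have antitone := prox_factor_antitone lamb0 lamb_le sigma0 mu0; rewrite -/c1 -/c2 in antitone.
have := ler_wpM2l (ltW lamb0) lam1_hv.
have := ler_wpM2r (mulr_ge0 (ler0n R 2) D0) antitone.
have := ler_wpM2l (mulr_ge0 (le_trans ler01 c20) D0) two_le.
have lam10 : 0 < lam1 by lra.
rewrite -(ler_pM2l lam10); nra.
Qed.

Lemma eps_rate_bound (lam1 lamb sigma mu d0 Q eps N X : R) :
  0 < lamb -> lamb <= lam1 -> 0 < mu -> 0 <= d0 -> 0 <= Q -> 0 <= eps -> 0 <= X ->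
  X + 2 * lam1 * eps <= sigma ^+ 2 * N ^+ 2 ->
  0 <= N -> N <= 2 * (d0 / Num.sqrt (mu * lamb) * Num.sqrt Q) ->
  eps <= 3 * sigma ^+ 2 * d0 ^+ 2 / (mu * lamb ^+ 2) * Q.
Proof.
move=> lamb0 lamb_le mu0 d00 Q0 eps0 X0 crit N0 N_le.
have ml0 : 0 < mu * lamb by apply: mulr_gt0.
set T := d0 ^+ 2 * Q / (mu * lamb).
have T0 : 0 <= T by rewrite /T divr_ge0 ?mulr_ge0 ?sqr_ge0 //; lra.
have twoD_sq : (2 * (d0 / Num.sqrt (mu * lamb) * Num.sqrt Q)) ^+ 2 = 4 * T.
  by rewrite !exprMn exprVn (sqr_sqrtr (ltW ml0)) (sqr_sqrtr Q0) /T; ring.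
have N_sq : N ^+ 2 <= 4 * T.
  by rewrite -twoD_sq ler_sqr ?nnegrE // !mulr_ge0 ?invr_ge0 ?sqrtr_ge0.
have := ler_wpM2l (sqr_ge0 sigma) N_sq.
have := ler_wpM2r eps0 lamb_le.
have -> : 3 * sigma ^+ 2 * d0 ^+ 2 / (mu * lamb ^+ 2) * Q = 3 * (sigma ^+ 2 * T) / lamb.
  by rewrite /T; field; rewrite !gt_eqF.
rewrite ler_pdivlMr //.
have : 0 <= sigma ^+ 2 * T by rewrite mulr_ge0 ?sqr_ge0.
nra.
Qed.

End RateArithmetic.

Section Algorithm1Analysis.
Variables (R : realType) (n : nat) (f g : 'rV[R]_n -> \bar R) (mu sigma lamb : R).
Variables (xs : 'rV[R]_n) (x y xt v : nat -> 'rV[R]_n) (lam eps A a : nat -> R).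
Hypotheses (pf : proper_fun f) (cvf : convex_fun f) (pg : proper_fun g).
Hypotheses (mu_gt0 : 0 < mu) (scg : strongly_convex mu g).
Hypothesis xs_min : forall z, (f xs + g xs <= f z + g z)%E.
Hypothesis xs_fin : (f xs + g xs < +oo)%E.
Hypothesis alg : algorithm1 f g mu sigma x y xt v lam eps A a.
Hypotheses (lamb_gt0 : 0 < lamb) (lamb_le : forall k, (1 <= k)%N -> lamb <= lam k).

Local Notation d0 := (hnorm (xs - x 0%N)).
Local Notation alpha := (Num.sqrt (mu * lamb / (1 + mu * lamb))).
Local Notation hs := (fine (f xs) + fine (g xs)).
Local Notation hy k := (fine (f (y k)) + fine (g (y k))).
(* the common distance bound of part (a) at iteration j + 1 *)
Local Notation dist_rate j := (d0 / Num.sqrt (mu * lamb) * Num.sqrt ((1 - alpha) ^+ j)).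

Let sigma01 : 0 <= sigma <= 1 := proj1 alg.
Let A0 : A 0%N = 0 := proj1 (proj2 alg).
Let iteration := proj2 (proj2 alg).

Lemma A_ge0 k : 0 <= A k.
Proof.
elim: k => [|k IH]; first by rewrite A0.
have [lam_gt0 [aE [_ [_ [_ [_ [AE _]]]]]]] := iteration k.
have [a_gt0 _ _] := step_size_props IH lam_gt0 mu_gt0 aE.
by rewrite AE; lra.
Qed.

Lemma A_succ_gt0 k : 0 < A k.+1.
Proof.
have [lam_gt0 [aE [_ [_ [_ [_ [AE _]]]]]]] := iteration k.
have [a_gt0 _ _] := step_size_props (A_ge0 k) lam_gt0 mu_gt0 aE.
by rewrite AE; have := A_ge0 k; lra.
Qed.

Lemma fin_xs : f xs = (fine (f xs))%:E /\ g xs = (fine (g xs))%:E.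
Proof. exact: fine_of_sum_lt xs_fin. Qed.

Lemma fin_y k : f (y k.+1) = (fine (f (y k.+1)))%:E /\ g (y k.+1) = (fine (g (y k.+1)))%:E.
Proof. by have [_ [_ [_ [_ [in_sum_v _]]]]] := iteration k; exact: fine_of_in_sum in_sum_v. Qed.

Lemma potential_bound k :
  A k.+1 * (hy k.+1 - hs) + (1 + mu * A k.+1) / 2 * hnorm (x k.+1 - xs) ^+ 2 <= d0 ^+ 2 / 2.
Proof.
have mu0 : 0 <= mu := ltW mu_gt0.
have [fsE gsE] := fin_xs.
have step j hk : A j * (hy j.+1 + inner (v j.+1) (y j - y j.+1) - eps j.+1
                         + mu / 2 * hnorm (y j - y j.+1) ^+ 2) <= A j * hk ->
    A j.+1 * (hy j.+1 - hs) + (1 + mu * A j.+1) / 2 * hnorm (x j.+1 - xs) ^+ 2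
      <= A j * (hk - hs) + (1 + mu * A j) / 2 * hnorm (x j - xs) ^+ 2.
  have [lam_gt0 [aE [xtE [_ [in_sum_v [crit [AE xE]]]]]]] := iteration j.
  have [fyE gyE] := fin_y j.
  rewrite AE in xE *.
  exact: potential_decrease (A_ge0 j) lam_gt0 mu_gt0 sigma01 aE xtE xE crit
    (in_sum_lower_bound scg mu0 in_sum_v fyE gyE fsE gsE).
elim: k => [|k IH].
  have := step 0%N 0; rewrite A0 !(mul0r, mulr0, addr0, add0r) (hnormBC (x 0%N)).
  by move=> /(_ (lexx 0)); lra.
apply: le_trans (step k.+1 (hy k.+1) _) _; last by lra.
have [_ [_ [_ [_ [in_sum_v _]]]]] := iteration k.+1.
have [fyE gyE] := fin_y k.+1; have [fyE' gyE'] := fin_y k.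
by rewrite ler_wpM2l ?A_ge0 // (in_sum_lower_bound scg mu0 in_sum_v fyE gyE fyE' gyE').
Qed.

(* A_{j+1} >= lamb (1 - alpha)^(-j): A_1 = a_1 >= lam_1 and [A_growth]. *)
Lemma A_lower_bound j : lamb <= (1 - alpha) ^+ j * A j.+1.
Proof.
have [_ alpha_lt1] := andP (alpha_bounds mu_gt0 lamb_gt0).
have alpha_le1 : 0 <= 1 - alpha by rewrite subr_ge0 ltW.
elim: j => [|j IH].
  have [lam_gt0 [aE [_ [_ [_ [_ [AE _]]]]]]] := iteration 0%N.
  have [_ a_ge _] := step_size_props (A_ge0 0) lam_gt0 mu_gt0 aE.
  rewrite expr0 mul1r AE A0 add0r; rewrite A0 in a_ge.
  by have := @lamb_le 1%N isT; lra.
have [lam_gt0 [aE [_ [_ [_ [_ [AE _]]]]]]] := iteration j.+1.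
have := A_growth (A_ge0 j.+1) lamb_gt0 (@lamb_le j.+2 isT) mu_gt0 aE.
rewrite -AE => /(ler_wpM2l (exprn_ge0 j alpha_le1)).
by rewrite exprS mulrA (mulrC _ (1 - alpha)); lra.
Qed.

Lemma squared_rates j :
  [/\ hy j.+1 - hs <= d0 ^+ 2 / (2 * lamb) * (1 - alpha) ^+ j,
      hnorm (y j.+1 - xs) ^+ 2 * (mu * lamb) <= d0 ^+ 2 * (1 - alpha) ^+ j &
      hnorm (x j.+1 - xs) ^+ 2 * (mu * lamb) <= d0 ^+ 2 * (1 - alpha) ^+ j].
Proof.
have [fsE gsE] := fin_xs; have [fyE gyE] := fin_y j.
have [_ alpha_lt1] := andP (alpha_bounds mu_gt0 lamb_gt0).
have Q0 : 0 < (1 - alpha) ^+ j by rewrite exprn_gt0 // subr_gt0.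
exact: rates_of_potential (A_succ_gt0 j) lamb_gt0 Q0 mu_gt0 (A_lower_bound j)
  (sqr_ge0 _) (sqr_ge0 _) (potential_bound j)
  (minimizer_quadratic_growth cvf scg (ltW mu_gt0) xs_min fsE gsE fyE gyE).
Qed.

Lemma rate_factor_ge0 j : 0 <= (1 - alpha) ^+ j.
Proof.
have [_ alpha_lt1] := andP (alpha_bounds mu_gt0 lamb_gt0).
by rewrite exprn_ge0 // subr_ge0 ltW.
Qed.

Lemma x_dist_rate j : hnorm (x j.+1 - xs) <= dist_rate j.
Proof.
have [_ _ rate] := squared_rates j.
by apply: hnorm_le_of_sq_rate rate; rewrite ?hnorm_ge0 ?mulr_gt0 ?rate_factor_ge0.
Qed.

Lemma y_dist_rate j : hnorm (y j.+1 - xs) <= dist_rate j.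
Proof.
have [_ rate _] := squared_rates j.
by apply: hnorm_le_of_sq_rate rate; rewrite ?hnorm_ge0 ?mulr_gt0 ?rate_factor_ge0.
Qed.

Lemma dist_rate_succ j : dist_rate j.+1 <= dist_rate j.
Proof.
have [alpha_gt0 alpha_lt1] := andP (alpha_bounds mu_gt0 lamb_gt0).
rewrite ler_wpM2l ?mulr_ge0 ?invr_ge0 ?hnorm_ge0 ?sqrtr_ge0 // ler_sqrt ?rate_factor_ge0 //.
by rewrite exprS ler_piMl ?rate_factor_ge0 //; lra.
Qed.

(* The prox center xt_{j+1} is an affine combination of x_{j+1} and y_{j+1}
   with nonnegative weights, so it inherits their distance bound. *)
Lemma xt_dist_rate j : hnorm (xt j.+1 - xs) <= dist_rate j.
Proof.
have [lam_gt0 [aE [xtE _]]] := iteration j.+1.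
have [a_gt0 a_ge _] := step_size_props (A_ge0 j.+1) lam_gt0 mu_gt0 aE.
have A_ge := A_ge0 j.+1.
have muAlam : 0 <= mu * A j.+1 * lam j.+2 by rewrite !mulr_ge0 ?(ltW mu_gt0) ?(ltW lam_gt0).
rewrite xtE; apply: hnorm_affine_le (x_dist_rate j) (y_dist_rate j).
- by rewrite divr_ge0 //; nra.
- by rewrite divr_ge0 //; lra.
- by field; rewrite gt_eqF //; lra.
Qed.

Lemma prox_step_rate j : hnorm (y j.+2 - xt j.+1) <= 2 * dist_rate j.
Proof.
have -> : y j.+2 - xt j.+1 = (y j.+2 - xs) - (xt j.+1 - xs) by rewrite opprB addrA subrK.
apply: (le_trans (hnormB_le _ _)).
have := le_trans (y_dist_rate j.+1) (dist_rate_succ j).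
by have := xt_dist_rate j; lra.
Qed.

Lemma value_and_distance_rates k : (1 <= k)%N ->
  ((f (y k) + g (y k)) - (f xs + g xs)
     <= (d0 ^+ 2 / (2 * lamb) * (1 - alpha) ^+ (k - 1))%:E)%E /\
  Num.max (hnorm (xs - y k)) (hnorm (xs - x k)) <= dist_rate (k - 1).
Proof.
case: k => [//|j] _; rewrite subn1 /=.
have [value _ _] := squared_rates j.
have [fyE gyE] := fin_y j; have [fsE gsE] := fin_xs.
split; first by rewrite fyE gyE fsE gsE -!EFinD ?EFinB lee_fin.
by rewrite ge_max (hnormBC xs (y j.+1)) (hnormBC xs (x j.+1)) x_dist_rate y_dist_rate.
Qed.

Lemma residual_rates k : (1 <= k)%N ->
  in_sum (eps_subdiff (eps k.+1) f (y k.+1)) (subdiff g (y k.+1)) (v k.+1) /\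
  hnorm (v k.+1) <=
    Num.sqrt 6 * (1 + sigma * Num.sqrt (1 + mu * lamb))
      / (Num.sqrt mu * (lamb * Num.sqrt lamb)) * d0 * Num.sqrt ((1 - alpha) ^+ (k - 1)) /\
  eps k.+1 <= 3 * sigma ^+ 2 * d0 ^+ 2 / (mu * lamb ^+ 2) * (1 - alpha) ^+ (k - 1).
Proof.
case: k => [//|j] _; rewrite subn1 /=.
have [lam_gt0 [_ [_ [eps0 [in_sum_v [crit _]]]]]] := iteration j.+1.
have [sigma0 _] := andP sigma01.
have lamb_le1 := @lamb_le j.+2 isT.
have step_le := prox_step_rate j.
split=> //; split.
  apply: (v_norm_bound lamb_gt0 lamb_le1 sigma0 mu_gt0 (hnorm_ge0 _) (rate_factor_ge0 j) _ step_le).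
  exact: scaled_residual_le lam_gt0 mu_gt0 sigma0 eps0 crit.
have err0 : 0 <= hnorm (lam j.+2 *: v j.+2 + y j.+2 - xt j.+1) ^+ 2 / (1 + lam j.+2 * mu).
  by rewrite divr_ge0 ?sqr_ge0 // addr_ge0 ?mulr_ge0 ?(ltW mu_gt0) ?(ltW lam_gt0).
exact: eps_rate_bound lamb_gt0 lamb_le1 mu_gt0 (hnorm_ge0 _) (rate_factor_ge0 j)
  eps0 err0 crit (hnorm_ge0 _) step_le.
Qed.

End Algorithm1Analysis.

Theorem theorem2p9 (R : realType) (n : nat) (f g : 'rV[R]_n -> \bar R) (mu : R)
  (xs : 'rV[R]_n) (sigma lamb : R)
  (x y xt v : nat -> 'rV[R]_n) (lam eps A a : nat -> R) :
  proper_fun f -> closed_fun f -> convex_fun f ->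
  proper_fun g -> closed_fun g -> 0 < mu -> strongly_convex mu g ->
  (exists z, ((f z + g z) < +oo)%E) ->
  (forall z, (f xs + g xs <= f z + g z)%E) ->
  algorithm1 f g mu sigma x y xt v lam eps A a ->
  0 < lamb -> (forall k, (1 <= k)%N -> lamb <= lam k) ->
  let d0 := hnorm (xs - x 0%N) in
  let alpha := Num.sqrt (mu * lamb / (1 + mu * lamb)) in
  (0 < alpha < 1) /\
  (forall k : nat, (1 <= k)%N ->
     ((f (y k) + g (y k)) - (f xs + g xs) <=
        (d0 ^+ 2 / (2 * lamb) * (1 - alpha) ^+ (k - 1))%:E)%E /\
     Num.max (hnorm (xs - y k)) (hnorm (xs - x k)) <=
        d0 / Num.sqrt (mu * lamb) * Num.sqrt ((1 - alpha) ^+ (k - 1))) /\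
  (forall k : nat, (1 <= k)%N ->
     in_sum (eps_subdiff (eps k.+1) f (y k.+1)) (subdiff g (y k.+1)) (v k.+1) /\
     hnorm (v k.+1) <=
       Num.sqrt 6 * (1 + sigma * Num.sqrt (1 + mu * lamb))
         / (Num.sqrt mu * (lamb * Num.sqrt lamb))
         * d0 * Num.sqrt ((1 - alpha) ^+ (k - 1)) /\
     eps k.+1 <= 3 * sigma ^+ 2 * d0 ^+ 2 / (mu * lamb ^+ 2) * (1 - alpha) ^+ (k - 1)).
Proof.
move=> pf _ cvf pg _ mu_gt0 scg [z hz] xs_min alg lamb_gt0 lamb_le d0 alpha.
have xs_fin : (f xs + g xs < +oo)%E := le_lt_trans (xs_min z) hz.
split; first exact: alpha_bounds.
split.
- exact: value_and_distance_rates pf cvf pg mu_gt0 scg xs_min xs_fin alg lamb_gt0 lamb_le.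
- exact: residual_rates pf cvf pg mu_gt0 scg xs_min xs_fin alg lamb_gt0 lamb_le.
Qed.
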